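(* Let $\mathcal{M}=(S,s_I,\mathit{Act},V,\mathcal{P})$ be an affine parametric Markov decision process, let $T\subseteq S$ and $\lambda\in[0,1]$, and let $\varphi$ be the reachability specification ''$T$ is reached with probability at most $\lambda$''. Assume that for every $s,s'\in S$ and $\alpha\in A(s)$, $\mathcal{P}(s,\alpha,s')=2d_{s,\alpha,s'}\,y_{s,\alpha,s'}+c_{s,\alpha,s'}$ with $y_{s,\alpha,s'}\in V$ and constants $c_{s,\alpha,s'},d_{s,\alpha,s'}\in\mathbb{R}$. Fix constants $\varepsilon_{\mathrm{graph}}>0$ and $\tau>0$, and arbitrary reference values $\hat v\in\mathbb{R}$ ($v\in V$) and $\hat p_s\in\mathbb{R}$ ($s\in S$). For each triple $(s,\alpha,s')$ write $d=d_{s,\alpha,s'}$, $c=c_{s,\alpha,s'}$, $y=y_{s,\alpha,s'}$, $z=p_{s'}$, $\hat y=\widehat{y_{s,\alpha,s'}}$, $\hat z=\hat p_{s'}$, $\sigma=1$ if $d\ge0$ and $\sigma=-1$ otherwise, and set $h_{\mathrm{cvx}}(s,\alpha,s')=|d|(y+\sigma z)^2+c\,z$ and $h_{\mathrm{aff}}(s,\alpha,s')=-|d|(\hat y^2+\hat z^2)-2|d|\big(\hat y(y-\hat y)+\hat z(z-\hat z)\big)$. Consider the convex penalty problem in the real variables $v\in V$, $p_s\in[0,1]$ ($s\in S$) and $k_s$ ($s\in S\setminus T$): minimize $p_{s_I}+\tau\sum_{s\in S\setminus T}k_s$ subject to $p_s=1$ for all $s\in T$; $\mathcal{P}(s,\alpha,s')\ge\varepsilon_{\mathrm{graph}}$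 for all $s,s'\in S$ and $\alpha\in A(s)$ such that $\mathcal{P}(s,\alpha,s')$ is not the zero polynomial; $\sum_{s'\in S}\mathcal{P}(s,\alpha,s')=1$ for all $s\in S$ and $\alpha\in A(s)$; $\lambda\ge p_{s_I}$; $k_s+p_s\ge\sum_{s'\in S}\big(h_{\mathrm{cvx}}(s,\alpha,s')+h_{\mathrm{aff}}(s,\alpha,s')\big)$ for all $s\in S\setminus T$ and $\alpha\in A(s)$; $k_s\ge 0$ for all $s\in S\setminus T$. If $(\mathbf{v},\mathbf{p},\mathbf{k})$ is a feasible solution of this problem with $\tau\sum_{s\in S\setminus T}k_s=0$, then the parameter instantiation $\mathbf{v}$ is well-defined for $\mathcal{M}$ and $\mathcal{M}[\mathbf{v}]\models\varphi$.
   Context: A pMDP is a tuple $(S,s_I,\mathit{Act},V,\mathcal{P})$ with finite state set $S$, initial state $s_I$, finite action set $\mathit{Act}$, finite set $V$ of real-valued parameters, and transition function $\mathcal{P}:S\times\mathit{Act}\times S\to\mathbb{Q}[V]$ (polynomials over $V$); it is affine if every $\mathcal{P}(s,\alpha,s')$ is affine in the parameters. $A(s)=\{\alpha\mid\exists s'.\ \mathcal{P}(s,\alpha,s')\ne0\}$ is the nonempty set of enabled actions at $s$. An instantiation $\mathbf{v}:V\to\mathbb{R}$ yields $\mathcal{M}[\mathbf{v}]$ by evaluating each polynomial at $\mathbf{v}$; it is well-defined if $\mathcal{M}[\mathbf{v}]$ is a Markov decision process, i.e. all $\mathcal{P}(s,\alpha,s')[\mathbf{v}]\in[0,1]$ and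 $\sum_{s'}\mathcal{P}(s,\alpha,s')[\mathbf{v}]=1$ for all $s$ and $\alpha\in A(s)$. A (memoryless deterministic) strategy is a map $\sigma:S\to\mathit{Act}$ with $\sigma(s)\in A(s)$; it induces a Markov chain. $\mathcal{M}[\mathbf{v}]\models\varphi$ means that for every strategy $\sigma$, the probability of eventually reaching $T$ from $s_I$ in the Markov chain induced by $\sigma$ on $\mathcal{M}[\mathbf{v}]$ is at most $\lambda$. *)

From mathcomp Require Import all_boot all_order all_algebra.
From mathcomp Require Import all_classical all_reals all_analysis.
Set Implicit Arguments. Unset Strict Implicit. Unset Printing Implicit Defensive.
Import Order.TTheory GRing.Theory Num.Theory.
Import numFieldNormedType.Exports.
Local Open Scope ring_scope.

Section PMDP.
Variables (R : realType) (S Act V : finType).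
(* The affine pMDP: P(s,a,s') = 2 * d s a s' * y s a s' + c s a s', with y s a s' in V. *)
Variables (d c : S -> Act -> S -> R) (y : S -> Act -> S -> V).

Definition nonzero_trans (s : S) (a : Act) (s' : S) : bool :=
  (d s a s' != 0) || (c s a s' != 0).

Definition enabled (s : S) (a : Act) : bool := [exists s', nonzero_trans s a s'].

Definition Pinst (v : V -> R) (s : S) (a : Act) (s' : S) : R :=
  2 * d s a s' * v (y s a s') + c s a s'.

Definition well_defined (v : V -> R) : Prop :=
  forall s a, enabled s a ->
    (forall s', 0 <= Pinst v s a s' <= 1) /\ \sum_(s' : S) Pinst v s a s' = 1.

Definition strategy (sg : S -> Act) : Prop := forall s, enabled s (sg s).

Fixpoint reach_bounded (v : V -> R) (sg : S -> Act) (T : {set S}) (n : nat) (s : S) : R :=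
  if s \in T then 1 else
  match n with
  | 0 => 0
  | n'.+1 => \sum_(s' : S) Pinst v s (sg s) s' * reach_bounded v sg T n' s'
  end.

Definition reach_prob (v : V -> R) (sg : S -> Act) (T : {set S}) (s : S) : R :=
  limn (fun n : nat => reach_bounded v sg T n s : R^o).

Definition satisfies (v : V -> R) (sI : S) (T : {set S}) (lam : R) : Prop :=
  forall sg, strategy sg -> reach_prob v sg T sI <= lam.

Definition sgnd (x : R) : R := if 0 <= x then 1 else -1.

Definition h_cvx (v : V -> R) (p : S -> R) (s : S) (a : Act) (s' : S) : R :=
  `|d s a s'| * (v (y s a s') + sgnd (d s a s') * p s') ^+ 2 + c s a s' * p s'.

Definition h_aff (vh : V -> R) (ph : S -> R) (v : V -> R) (p : S -> R)
    (s : S) (a : Act) (s' : S) : R :=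
  let yh := vh (y s a s') in let zh := ph s' in
  - `|d s a s'| * (yh ^+ 2 + zh ^+ 2)
  - 2 * `|d s a s'| * (yh * (v (y s a s') - yh) + zh * (p s' - zh)).

Definition feasible (sI : S) (T : {set S}) (lam eps : R) (vh : V -> R) (ph : S -> R)
    (v : V -> R) (p : S -> R) (k : S -> R) : Prop :=
  (forall s, 0 <= p s <= 1) /\
  (forall s, s \in T -> p s = 1) /\
  (forall s a s', enabled s a -> nonzero_trans s a s' -> eps <= Pinst v s a s') /\
  (forall s a, enabled s a -> \sum_(s' : S) Pinst v s a s' = 1) /\
  p sI <= lam /\
  (forall s a, s \notin T -> enabled s a ->
     \sum_(s' : S) (h_cvx v p s a s' + h_aff vh ph v p s a s') <= k s + p s) /\
  (forall s, s \notin T -> 0 <= k s).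

End PMDP.

(** The convexified constraint over-approximates the bilinear Bellman
    inequality: for every triple, [h_cvx + h_aff] equals
    [P(s,a,s') p_s' + |d| ((y - yh)^2 + (p_s' - ph_s')^2)], the linearization
    of the concave part being exact up to a square.  Hence, when all slacks
    vanish, [p] is an excessive function of the instantiated MDP: [p = 1] on
    [T] and [p_s >= sum_s' P(s,a,s') p_s'] for every enabled action.  By
    induction [p] bounds every bounded reachability probability under any
    strategy, so it bounds their (monotone) limit, and [p sI <= lam]. *)
From mathcomp Require Import all_boot all_order all_algebra.
From mathcomp Require Import all_classical all_reals all_analysis.
From mathcomp Require Import ring.
Set Implicit Arguments. Unset Strict Implicit.
Import Order.TTheory GRing.Theory Num.Theory.
Local Open Scope ring_scope.

Section PenaltyProblem.
Variables (R : realType) (S Act V : finType).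
Variables (d c : S -> Act -> S -> R) (y : S -> Act -> S -> V).

Lemma Pinst_zero (v : V -> R) s a s' :
  ~~ nonzero_trans d c s a s' -> Pinst d c y v s a s' = 0.
Proof.
rewrite /nonzero_trans negb_or !negbK /Pinst => /andP[/eqP -> /eqP ->].
by rewrite mulr0 mul0r addr0.
Qed.

Lemma Pinst_ge0 (eps : R) (v : V -> R) :
  0 < eps ->
  (forall s a s', enabled d c s a -> nonzero_trans d c s a s' -> eps <= Pinst d c y v s a s') ->
  forall s a s', enabled d c s a -> 0 <= Pinst d c y v s a s'.
Proof.
move=> eps_gt0 Peps s a s' en; have [nz|z] := boolP (nonzero_trans d c s a s').
  exact: le_trans (ltW eps_gt0) (Peps _ _ _ en nz).
by rewrite Pinst_zero.
Qed.

Lemma well_defined_stochastic (v : V -> R) :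
  (forall s a s', enabled d c s a -> 0 <= Pinst d c y v s a s') ->
  (forall s a, enabled d c s a -> \sum_s' Pinst d c y v s a s' = 1) ->
  well_defined d c y v.
Proof.
move=> P_ge0 P_sum s a en; split=> [s'|]; last exact: P_sum.
rewrite P_ge0 //= -(P_sum s a en) (bigD1 s') //= lerDl.
by apply: sumr_ge0 => s'' _; apply: P_ge0.
Qed.

Lemma h_cvx_add_h_aff (vh : V -> R) (ph : S -> R) (v : V -> R) (p : S -> R) s a s' :
  h_cvx d c y v p s a s' + h_aff d y vh ph v p s a s' =
  Pinst d c y v s a s' * p s' +
  `|d s a s'| * ((v (y s a s') - vh (y s a s')) ^+ 2 + (p s' - ph s') ^+ 2).
Proof.
rewrite /h_cvx /h_aff /Pinst /sgnd.
by case: (leP 0 (d s a s')) => [/ger0_norm|/ltr0_norm] ->; ring.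
Qed.

Lemma Pinst_mul_le_h (vh : V -> R) (ph : S -> R) (v : V -> R) (p : S -> R) s a s' :
  Pinst d c y v s a s' * p s' <= h_cvx d c y v p s a s' + h_aff d y vh ph v p s a s'.
Proof.
by rewrite h_cvx_add_h_aff lerDl mulr_ge0 // addr_ge0 // sqr_ge0.
Qed.

Lemma Pinst_expectation_le_penalty (vh : V -> R) (ph : S -> R) (v : V -> R)
    (p : S -> R) s a (b : R) :
  \sum_s' (h_cvx d c y v p s a s' + h_aff d y vh ph v p s a s') <= b ->
  \sum_s' Pinst d c y v s a s' * p s' <= b.
Proof. by apply: le_trans; apply: ler_sum => s' _; apply: Pinst_mul_le_h. Qed.

Section Reachability.
Variables (v : V -> R) (sg : S -> Act) (T : {set S}).
Hypothesis P_ge0 : forall s s', 0 <= Pinst d c y v s (sg s) s'.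

Local Notation reach := (reach_bounded d c y v sg T).

Lemma reach_bounded_ge0 n s : 0 <= reach n s.
Proof.
elim: n s => [|n IH] s /=; case: ifP => // _.
by apply: sumr_ge0 => s' _; rewrite mulr_ge0.
Qed.

Lemma reach_bounded_leS n s : reach n s <= reach n.+1 s.
Proof.
elim: n s => [|n IH] s /=; case: ifP => // _.
  by apply: sumr_ge0 => s' _; rewrite mulr_ge0 //; apply: (reach_bounded_ge0 0).
by apply: ler_sum => s' _; rewrite ler_wpM2l.
Qed.

Variable q : S -> R.
Hypotheses (q_ge0 : forall s, 0 <= q s) (q_T : forall s, s \in T -> 1 <= q s).
Hypothesis q_excessive :
  forall s, s \notin T -> \sum_s' Pinst d c y v s (sg s) s' * q s' <= q s.

Lemma reach_bounded_le_excessive n s : reach n s <= q s.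
Proof.
elim: n s => [|n IH] s /=; case: ifPn => [/q_T //|sT]; first exact: q_ge0.
apply: le_trans (q_excessive sT); apply: ler_sum => s' _.
by rewrite ler_wpM2l.
Qed.

Lemma reach_prob_le_excessive s : reach_prob d c y v sg T s <= q s.
Proof.
have bounded : has_ubound (range (reach^~ s)).
  by exists (q s) => _ [n _ <-]; apply: reach_bounded_le_excessive.
have nondecreasing : nondecreasing_seq (reach^~ s).
  by apply/nondecreasing_seqP => n; apply: reach_bounded_leS.
have cv := nondecreasing_cvgn nondecreasing bounded.
apply: limr_le; first exact: (cvgP (sup (range (reach^~ s)) : R^o) cv).
by apply: nearW => n; apply: reach_bounded_le_excessive.
Qed.

End Reachability.
End PenaltyProblem.

Theorem theorem1 (R : realType) (S Act V : finType)
  (d c : S -> Act -> S -> R) (y : S -> Act -> S -> V)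
  (sI : S) (T : {set S}) (lam eps tau : R)
  (vh : V -> R) (ph : S -> R) (v : V -> R) (p : S -> R) (k : S -> R) :
  (forall s, exists a, enabled d c s a) ->
  0 <= lam <= 1 -> 0 < eps -> 0 < tau ->
  feasible d c y sI T lam eps vh ph v p k ->
  tau * (\sum_(s in ~: T) k s) = 0 ->
  well_defined d c y v /\ satisfies d c y v sI T lam.
Proof.
move=> _ _ eps_gt0 tau_gt0 [p01 [pT [Peps [Psum [p_lam [h_le k_ge0]]]]]] no_penalty.
have P_ge0 := Pinst_ge0 eps_gt0 Peps.
split; first exact: well_defined_stochastic.
have k_sum0 : \sum_(s in ~: T) k s = 0.
  by move: no_penalty => /eqP; rewrite mulf_eq0 gt_eqF //= => /eqP.
have k0 s : s \notin T -> k s = 0.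
  by move=> sT; apply: (psumr_eq0P _ k_sum0) => [i|]; rewrite inE //; apply: k_ge0.
move=> sg sg_en; apply: le_trans p_lam.
apply: reach_prob_le_excessive => [s s'|s|s /pT -> //|s sT].
- exact: P_ge0.
- by case/andP: (p01 s).
- have := h_le _ _ sT (sg_en s); rewrite k0 // add0r.
  exact: Pinst_expectation_le_penalty.
Qed.
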